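(* Let $\mathbf{A}\in\mathbb{R}^{N\times N}$, $\mathbf{B}\in\mathbb{R}^{N\times m}$, $\mathbf{C}\in\mathbb{R}^{n\times N}$. Then for every integer $i\ge 0$, $$R_i\le \operatorname{rank}(\mathbf{W})-\operatorname{rank}(\mathbf{A}\mathbf{W})\le N-\operatorname{rank}(\mathbf{A}).$$ Consequently, for any integer $0<s\le m$, if $\operatorname{rank}(\mathbf{C}\mathbf{W})=n$ and $s\ge \operatorname{rank}(\mathbf{W})-\operatorname{rank}(\mathbf{A}\mathbf{W})$, then the system is output $s$-sparse controllable.
   Context: A vector in $\mathbb{R}^m$ is $s$-sparse if at most $s$ of its entries are nonzero. The system $(\mathbf{A},\mathbf{B},\mathbf{C})$ with $\mathbf{x}_k=\mathbf{A}\mathbf{x}_{k-1}+\mathbf{B}\mathbf{u}_k$, $\mathbf{y}_k=\mathbf{C}\mathbf{x}_k$ is called output $s$-sparse controllable if there exists an integer $0<K<\infty$ such that for every initial state $\mathbf{x}_0\in\mathbb{R}^N$ and every target $\mathbf{y}_f\in\mathbb{R}^n$ there exist $s$-sparse inputs $\mathbf{u}_1,\dots,\mathbf{u}_K\in\mathbb{R}^m$ with $\mathbf{y}_K=\mathbf{C}\sum_{k=1}^K\mathbf{A}^{K-k}\mathbf{B}\mathbf{u}_k+\mathbf{C}\mathbf{A}^K\mathbf{x}_0=\mathbf{y}_f$ (the supports of the $\mathbf{u}_k$ may differ across $k$). The controllability matrix is $\mathbf{W}=[\mathbf{A}^{N-1}\mathbf{B}\ \ \mathbf{A}^{N-2}\mathbf{B}\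 \cdots\ \mathbf{B}]\in\mathbb{R}^{N\times Nm}$, and for integers $i\ge 0$, $R_i=\operatorname{rank}(\mathbf{C}\mathbf{A}^i\mathbf{W})-\operatorname{rank}(\mathbf{C}\mathbf{A}^{i+1}\mathbf{W})$. *)

From HB Require Import structures.
From mathcomp Require Import all_boot all_order all_algebra.
From mathcomp Require Import reals.
Set Implicit Arguments. Unset Strict Implicit. Unset Printing Implicit Defensive.
Import Order.TTheory GRing.Theory Num.Theory.
Local Open Scope ring_scope.

Definition ctrb_mx (R : realType) (N m : nat) (A : 'M[R]_N) (B : 'M[R]_(N, m))
  : 'M[R]_(N, \sum_(j < N) m) :=
  \mxrow_(j < N) (A ^+ (N.-1 - j)%N *m B).

Definition R_idx (R : realType) (N m n : nat) (A : 'M[R]_N) (B : 'M[R]_(N, m))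
  (C : 'M[R]_(n, N)) (i : nat) : nat :=
  (\rank (C *m A ^+ i *m ctrb_mx A B) - \rank (C *m A ^+ i.+1 *m ctrb_mx A B))%N.

Definition sparse (R : realType) (m : nat) (s : nat) (v : 'cV[R]_m) : Prop :=
  (#|[set j : 'I_m | v j ord0 != 0%R]| <= s)%N.

(* output s-sparse controllability of (A,B,C); inputs u_1..u_K are u 1 .. u K *)
Definition output_sparse_controllable (R : realType) (N m n : nat)
  (A : 'M[R]_N) (B : 'M[R]_(N, m)) (C : 'M[R]_(n, N)) (s : nat) : Prop :=
  exists K : nat, (0 < K)%N /\
    forall (x0 : 'cV[R]_N) (yf : 'cV[R]_n),
    exists u : nat -> 'cV[R]_m,
      (forall k, (1 <= k <= K)%N -> sparse s (u k)) /\
      C *m (\sum_(1 <= k < K.+1) (A ^+ (K - k)%N *m B *m u k)) + C *m (A ^+ K *m x0) = yf.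

From HB Require Import structures.
From mathcomp Require Import all_boot all_order all_algebra.
From mathcomp Require Import reals.
From Stdlib Require Import Classical.
From mathcomp Require Import zify.
Set Implicit Arguments. Unset Strict Implicit. Unset Printing Implicit Defensive.
Import Order.TTheory GRing.Theory Num.Theory.
Local Open Scope ring_scope.

(* We work with row spaces of transposes.  Let X_k := (A^k B)^T and let
   tail t be the row space spanned by all X_k with k >= t (by Cayley-Hamilton
   X_t, ..., X_(t+N-1) suffice).  Then tail 0 is the row space of W^T,
   tail 1 that of (A W)^T, and tail t *m A^T = tail t.+1.

   Rank bounds: the Frobenius rank inequality, applied to the A^T-invariant
   space tail 0, bounds every R_i and also every later drop
   rank (tail t) - rank (tail t.+1) by the first drop d := rank W - rank (A W).

   Controllability: we build a schedule S t of at most s input channels per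
   time step such that the selected columns of A^t B span the column space
   of W.  Before the tails stabilise, a greedy basis extension chooses at most
   (drop at t) <= d <= s columns of A^t B; afterwards one new independent
   column per time step is added until everything is spanned.  Finally
   rank (C W) = n gives, for every target, a v in the column space of W with
   C v = y, and expanding v over the scheduled columns yields sparse inputs. *)

Lemma nonincreasing_stabilizes (f : nat -> nat) :
  (forall t, (f t.+1 <= f t)%N) -> exists M, forall t, (M <= t)%N -> f t = f M.
Proof.
have [b] := ubnP (f 0%N); elim: b f => // b IH f f0b decr.
have [const|] := classic (forall t, f t = f 0%N); first by exists 0%N.
move=> /not_all_ex_not [t ft_neq].
have ft_le : (f t <= f 0%N)%N.
  by elim: (t) => // k IHk; exact: leq_trans (decr k) IHk.
have [|k|M stableM] := IH (fun k => f (t + k)%N).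
- by move: ft_neq; rewrite addn0; lia.
- by rewrite addnS.
exists (t + M)%N => k leMk; rewrite -(subnKC (leq_trans (leq_addr M t) leMk)).
by apply: stableM; lia.
Qed.

Lemma rank_drop_invariant (F : fieldType) p N q
    (Y : 'M[F]_(p, N)) (M : 'M[F]_N) (Z : 'M[F]_(N, q)) :
  (Y *m M <= Y)%MS ->
  (\rank (Y *m Z) - \rank (Y *m M *m Z) <= \rank Y - \rank (Y *m M))%N.
Proof. by case/submxP => K ->; have := mxrank_Frobenius K Y Z; lia. Qed.

Lemma rank_increment_antitone (F : fieldType) N p q r
    (P : 'M[F]_(p, N)) (Q : 'M[F]_(q, N)) (U : 'M[F]_(r, N)) :
  (U <= P)%MS -> (\rank (P + Q) - \rank P <= \rank (U + Q) - \rank U)%N.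
Proof.
move=> sUP; have := mxrank_sum_cap P Q; have := mxrank_sum_cap U Q.
have := mxrankS (capmxS sUP (submx_refl Q)); lia.
Qed.

(* The diagonal 0/1 matrix keeping the rows (input channels) indexed by S. *)
Definition sel_mx (F : fieldType) m (S : {set 'I_m}) : 'M[F]_m :=
  diag_mx (\row_i (i \in S)%:R).
Arguments sel_mx {F m} S.

Definition update_at (T : Type) (f : nat -> T) (t : nat) (x : T) : nat -> T :=
  fun k => if k == t then x else f k.

Section Selection.
Variables (F : fieldType) (m N : nat).

Lemma row_sub_sel (S : {set 'I_m}) (X : 'M[F]_(m, N)) i :
  i \in S -> (row i X <= sel_mx S *m X)%MS.
Proof.
move=> iS; have <- : row i (sel_mx S *m X) = row i X.
  by apply/rowP => j; rewrite /sel_mx mul_diag_mx !mxE iS mul1r.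
exact: row_sub.
Qed.

Lemma sel_mxS (S S' : {set 'I_m}) (X : 'M[F]_(m, N)) :
  S \subset S' -> (sel_mx S *m X <= sel_mx S' *m X)%MS.
Proof.
move=> sSS'; have -> : sel_mx S *m X = sel_mx S *m (sel_mx S' *m X).
  apply/matrixP => i j; rewrite /sel_mx !mul_diag_mx !mxE.
  by case: (boolP (i \in S)) => iS; rewrite ?mul0r // (subsetP sSS' _ iS) !mul1r.
exact: submxMl.
Qed.

Lemma sel_grow p (P : 'M[F]_(p, N)) (X : 'M[F]_(m, N)) S :
  ~~ (X <= P + sel_mx S *m X)%MS ->
  exists S' : {set 'I_m}, #|S'| = #|S|.+1 /\
    (\rank (P + sel_mx S *m X) < \rank (P + sel_mx S' *m X))%N.
Proof.
case/row_subPn => i iX_out.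
have iS : i \notin S.
  apply: contra iX_out => iS.
  exact: submx_trans (row_sub_sel X iS) (addsmxSr _ _).
exists (i |: S); split; first by rewrite cardsU1 iS.
have sub : (P + sel_mx S *m X <= P + sel_mx (i |: S) *m X)%MS.
  by apply: addsmxS => //; apply/sel_mxS/subsetUr.
have [le eq_rank] := mxrank_leqif_sup sub.
rewrite ltn_neqAle le andbT eq_rank; apply: contra iX_out.
exact: submx_trans (submx_trans (row_sub_sel X (setU11 i S)) (addsmxSr _ _)).
Qed.

Lemma greedy_selection p (P : 'M[F]_(p, N)) (X : 'M[F]_(m, N)) :
  exists2 S : {set 'I_m}, (X <= P + sel_mx S *m X)%MS &
    (#|S| + \rank P <= \rank (P + X))%N.
Proof.
have rank_sel S : (\rank (P + sel_mx S *m X) <= \rank (P + X))%N.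
  by apply/mxrankS/addsmxS => //; apply: submxMl.
have init : (#|(set0 : {set 'I_m})| + \rank P <= \rank (P + sel_mx set0 *m X))%N.
  by rewrite cards0 add0n mxrankS ?addsmxSl.
have [d] := ubnP (\rank (P + X) - \rank (P + sel_mx set0 *m X))%N.
elim: d (set0 : {set 'I_m}) init => // d IH S invariant measure.
have [spans|/sel_grow [S' [cardS' rank_lt]]] := boolP (X <= P + sel_mx S *m X)%MS.
  by exists S => //; exact: leq_trans invariant (rank_sel S).
by apply: (IH S'); have := rank_sel S'; lia.
Qed.

End Selection.

Section KrylovTails.
Variables (F : fieldType) (N m : nat) (A : 'M[F]_N) (B : 'M[F]_(N, m)).

Definition trblock (k : nat) : 'M[F]_(m, N) := (A ^+ k *m B)^T.

Definition tail (t : nat) : 'M[F]_N := (\sum_(j < N) <<trblock (t + j)>>)%MS.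

Lemma pow_span_low_powers k :
  exists c : 'I_N -> F, A ^+ k = \sum_(i < N) c i *: A ^+ i.
Proof.
case: N A => [|n] M; first by exists (fun _ => 0); apply/matrixP => -[].
have Xk_in := horner_mx_mem M 'X^k.
rewrite rmorphXn /= horner_mx_X in Xk_in.
have deg_le : (degree_mxminpoly M <= n.+1)%N.
  have := dvdp_leq (monic_neq0 (char_poly_monic M)) (mxminpoly_dvd_char M).
  by rewrite size_mxminpoly size_char_poly.
have powers_sub : (powers_mx M (degree_mxminpoly M) <= powers_mx M n.+1)%MS.
  apply/row_subP => i; rewrite rowK.
  by apply: (eq_row_sub (widen_ord deg_le i)); rewrite rowK.
have /submxP [u eu] := submx_trans Xk_in powers_sub.
exists (fun i => u 0 i).
rewrite -[M ^+ k]mxvecK eu mulmx_sum_row linear_sum; apply: eq_bigr => i _.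
by rewrite rowK linearZ /= mxvecK.
Qed.

Lemma trblockS k : trblock k.+1 = trblock k *m A^T.
Proof. by rewrite /trblock exprS -mulmxE -mulmxA trmx_mul. Qed.

Lemma trblock_in_tail t k : (t <= k)%N -> (trblock k <= tail t)%MS.
Proof.
move=> le_tk; have [c ec] := pow_span_low_powers (k - t).
have -> : trblock k = \sum_(i < N) c i *: trblock (t + i).
  rewrite /trblock -(subnKC le_tk) exprD ec mulr_sumr mulmx_suml linear_sum.
  apply: eq_bigr => i _.
  by rewrite -mulmxE -scalemxAr -scalemxAl linearZ /= mulmxE -exprD.
apply: summx_sub => i _; apply: scalemx_sub.
by rewrite /tail (sumsmx_sup i) // genmxE.
Qed.

Lemma tail_mono t k : (t <= k)%N -> (tail k <= tail t)%MS.
Proof.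
move=> le_tk; apply/sumsmx_subP => j _; rewrite genmxE trblock_in_tail //.
exact: leq_trans le_tk (leq_addr _ _).
Qed.

Lemma tail_cons t : (tail t :=: trblock t + tail t.+1)%MS.
Proof.
apply/eqmxP; rewrite addsmx_sub trblock_in_tail // tail_mono //= andbT.
apply/sumsmx_subP => -[[|j] lt_jN] _; rewrite genmxE /=.
  by rewrite addn0 addsmxSl.
by rewrite -addSnnS (submx_trans _ (addsmxSr _ _)) ?trblock_in_tail ?leq_addr.
Qed.

Lemma tail_mulAT t : (tail t *m A^T :=: tail t.+1)%MS.
Proof.
apply: eqmx_trans (sumsmxMr_gen _ _ _) _; apply: eqmx_sums => j _.
apply: eqmx_trans (genmxE _) _; apply: eqmx_trans (eqmxMr _ (genmxE _)) _.
by rewrite -trblockS addSn; apply: eqmx_sym; apply: genmxE.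
Qed.

Lemma tail_mulATpow t : (tail 0 *m (A^T) ^+ t :=: tail t)%MS.
Proof.
elim: t => [|t IH]; first by rewrite expr0 mulmx1.
rewrite exprSr -mulmxE mulmxA.
exact: eqmx_trans (eqmxMr _ IH) (tail_mulAT _).
Qed.

Lemma tail0_invariant : (tail 0 *m A^T <= tail 0)%MS.
Proof. by rewrite (tail_mulAT 0) tail_mono. Qed.

Lemma tail_drop_le_first t :
  (\rank (tail t) - \rank (tail t.+1) <= \rank (tail 0) - \rank (tail 1))%N.
Proof.
have := rank_drop_invariant ((A^T) ^+ t) tail0_invariant.
rewrite (tail_mulATpow t) (tail_mulAT 0).
have -> : tail 0 *m A^T *m A^T ^+ t = tail 0 *m A^T ^+ t *m A^T.
  by rewrite -!mulmxA !mulmxE -exprS -exprSr.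
by rewrite (eqmxMr _ (tail_mulATpow t)) (tail_mulAT t).
Qed.

Lemma tail_stabilizes :
  exists M, forall t, (M <= t)%N -> (tail M <= tail t)%MS.
Proof.
have [|M stable] := @nonincreasing_stabilizes (fun t => \rank (tail t)).
  by move=> t; apply/mxrankS/tail_mono.
exists M => t le_Mt; have [_ <-] := mxrank_leqif_sup (tail_mono le_Mt).
by rewrite stable.
Qed.

Lemma tail_row_outside p t (U : 'M[F]_(p, N)) :
  ~~ (tail t <= U)%MS ->
  exists k i, (t <= k)%N /\ ~~ (row i (trblock k) <= U)%MS.
Proof.
move=> tail_out.
have [j] : exists j : 'I_N, ~~ (<<trblock (t + j)>> <= U)%MS.
  apply/existsP; apply: contraR tail_out => /existsPn all_in.
  by apply/sumsmx_subP => j _; apply/negPn/all_in.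
rewrite genmxE => /row_subPn [i out].
by exists (t + j)%N, i; rewrite leq_addr.
Qed.

(* Schedules: S t selects the channels used at time t; reach_space S K is
   spanned by the selected rows of X_0, ..., X_(K-1). *)
Definition reach_space (S : nat -> {set 'I_m}) (K : nat) : 'M[F]_N :=
  (\sum_(t < K) <<sel_mx (S t) *m trblock t>>)%MS.

Lemma reach_space_mono S S' K K' :
  (forall t, (t < K)%N -> S t = S' t) -> (K <= K')%N ->
  (reach_space S K <= reach_space S' K')%MS.
Proof.
move=> eqS le_KK'; apply/sumsmx_subP => t _; rewrite genmxE eqS //.
by apply: (sumsmx_sup (widen_ord le_KK' t)) => //; rewrite genmxE.
Qed.

Lemma reach_space_update S t t' X :
  (t <= t')%N ->
  (reach_space S t <= reach_space (update_at S t' X) t'.+1)%MS /\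
  (sel_mx X *m trblock t' <= reach_space (update_at S t' X) t'.+1)%MS.
Proof.
move=> le_tt'; split.
  apply: reach_space_mono; last exact: leqW.
  by move=> k lt_kt; rewrite /update_at (ltn_eqF (leq_trans lt_kt le_tt')).
apply: (sumsmx_sup (Ordinal (ltnSn t'))) => //=.
by rewrite genmxE /update_at eqxx.
Qed.

Section Schedules.
Variable s : nat.

Lemma schedule_prefix :
  (\rank (tail 0) - \rank (tail 1) <= s)%N ->
  forall t, exists S : nat -> {set 'I_m},
    (forall k, #|S k| <= s)%N /\ (tail 0 <= reach_space S t + tail t)%MS.
Proof.
move=> drop0_le; elim=> [|t [S [cardS covered]]].
  by exists (fun _ => set0); split => [k|]; rewrite ?cards0 ?addsmxSr.
set P := (reach_space S t + tail t.+1)%MS.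
have [Sel spans cardSel] := greedy_selection P (trblock t).
have [grow_old grow_new] := reach_space_update S Sel (leqnn t).
exists (update_at S t Sel); split.
  move=> k; rewrite /update_at; case: eqP => // _.
  have := rank_increment_antitone (trblock t) (addsmxSr (reach_space S t) (tail t.+1)).
  have drop_t : \rank (tail t.+1 + trblock t) = \rank (tail t).
    by rewrite (tail_cons t) addsmxC.
  by rewrite -/P drop_t; have := tail_drop_le_first t; lia.
have P_sub : (P <= reach_space (update_at S t Sel) t.+1 + tail t.+1)%MS.
  exact: addsmxS.
apply: submx_trans covered _; rewrite addsmx_sub (submx_trans grow_old) ?addsmxSl //=.
rewrite (tail_cons t) addsmx_sub (submx_trans (addsmxSr _ _) P_sub) andbT.
apply: submx_trans spans _; rewrite addsmx_sub P_sub /=.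
exact: submx_trans grow_new (addsmxSl _ _).
Qed.

Lemma schedule_complete M :
  (0 < s)%N -> (forall t, (M <= t)%N -> (tail M <= tail t)%MS) ->
  forall t (S : nat -> {set 'I_m}), (M <= t)%N ->
    (forall k, #|S k| <= s)%N -> (tail 0 <= reach_space S t + tail M)%MS ->
  exists K (S' : nat -> {set 'I_m}),
    (forall k, #|S' k| <= s)%N /\ (tail 0 <= reach_space S' K)%MS.
Proof.
move=> s_gt0 stable t S le_Mt cardS covered.
have [c] := ubnP (N - \rank (reach_space S t))%N.
elim: c t S le_Mt cardS covered => // c IH t S le_Mt cardS covered measure.
have [done|not_done] := boolP (tail 0 <= reach_space S t)%MS.
  by exists t, S.
have tail_out : ~~ (tail t <= reach_space S t)%MS.
  apply: contra not_done => tail_in; apply: submx_trans covered _.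
  by rewrite addsmx_sub submx_refl (submx_trans (stable t le_Mt)).
have [k [i [le_tk row_out]]] := tail_row_outside tail_out.
have [grow_old grow_new] := reach_space_update S [set i] le_tk.
have rank_lt : (\rank (reach_space S t) <
                \rank (reach_space (update_at S k [set i]) k.+1))%N.
  have [le eq_rank] := mxrank_leqif_sup grow_old.
  rewrite ltn_neqAle le andbT eq_rank; apply: contra row_out.
  exact: submx_trans (submx_trans (row_sub_sel _ (set11 i)) grow_new).
apply: (IH k.+1 (update_at S k [set i])).
- exact: leq_trans le_Mt (leqW le_tk).
- by move=> k'; rewrite /update_at; case: eqP; rewrite ?cards1.
- exact: submx_trans covered (addsmxS grow_old (submx_refl _)).
- by have := rank_leq_col (reach_space (update_at S k [set i]) k.+1); lia.
Qed.

Lemma spanning_schedule :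
  (0 < s)%N -> (\rank (tail 0) - \rank (tail 1) <= s)%N ->
  exists K (S : nat -> {set 'I_m}),
    (forall k, #|S k| <= s)%N /\ (tail 0 <= reach_space S K)%MS.
Proof.
move=> s_gt0 drop0_le; have [M stable] := tail_stabilizes.
have [S [cardS covered]] := schedule_prefix drop0_le M.
exact: (@schedule_complete M s_gt0 stable M S (leqnn M) cardS covered).
Qed.

End Schedules.
End KrylovTails.

Section RealSystems.
Variables (R : realType) (N m n : nat).
Variables (A : 'M[R]_N) (B : 'M[R]_(N, m)) (C : 'M[R]_(n, N)).

(* The rows of W^T are the blocks X_(N-1), ..., X_0, so W^T spans tail 0. *)
Lemma ctrb_tail : ((ctrb_mx A B)^T :=: tail A B 0)%MS.
Proof.
rewrite /ctrb_mx tr_mxrow; apply: eqmx_trans (eqmx_col _) _.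
rewrite /tail (reindex_inj rev_ord_inj) /=.
apply/eqmxP; apply/andP; split; apply/sumsmxS => i _;
  rewrite /trblock add0n; have -> : (N.-1 - rev_ord i)%N = i by case: i => i /=; lia.
all: by [].
Qed.

Lemma rank_ctrb : \rank (ctrb_mx A B) = \rank (tail A B 0).
Proof. by rewrite -mxrank_tr ctrb_tail. Qed.

Lemma rank_A_ctrb : \rank (A *m ctrb_mx A B) = \rank (tail A B 1).
Proof. by rewrite -mxrank_tr trmx_mul (eqmxMr _ ctrb_tail) (tail_mulAT A B 0). Qed.

Lemma R_idx_bounds i :
  (R_idx A B C i <= \rank (ctrb_mx A B) - \rank (A *m ctrb_mx A B))%N /\
  (\rank (ctrb_mx A B) - \rank (A *m ctrb_mx A B) <= N - \rank A)%N.
Proof.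
split; last first.
  have := mxrank_mul_min A (ctrb_mx A B).
  by move: (\rank A) (\rank (ctrb_mx A B)) (\rank (A *m ctrb_mx A B)); lia.
set W := ctrb_mx A B.
have invariant : (W^T *m A^T <= W^T)%MS.
  by rewrite (eqmxMr _ ctrb_tail) (tail_mulAT A B 0) ctrb_tail tail_mono.
have := rank_drop_invariant (C *m A ^+ i)^T invariant.
rewrite /R_idx -/W -(mxrank_tr W) -[\rank (W^T *m A^T)]mxrank_tr.
rewrite -[\rank (W^T *m _)]mxrank_tr -[\rank (W^T *m A^T *m _)]mxrank_tr.
by rewrite !trmx_mul !trmxK exprSr -mulmxE !mulmxA.
Qed.

(* A vector whose transpose lies in reach_space S K is a sum of the inputs
   A^(K-k) B u_k with u_k supported in S (K - k). *)
Lemma sparse_expansion s (S : nat -> {set 'I_m}) K (v : 'cV[R]_N) :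
  (forall k, #|S k| <= s)%N -> (v^T <= reach_space A B S K)%MS ->
  exists u : nat -> 'cV[R]_m,
    (forall k, (1 <= k <= K)%N -> sparse s (u k)) /\
    \sum_(1 <= k < K.+1) (A ^+ (K - k)%N *m B *m u k) = v.
Proof.
move=> cardS /sub_sums_genmxP [a ea].
pose w t : 'cV[R]_m := (oapp a 0 (insub t) *m sel_mx (S t))^T.
exists (fun k => w (K - k)%N); split.
  move=> k _; rewrite /sparse; apply: leq_trans (cardS (K - k)%N).
  apply/subset_leq_card/subsetP => j; rewrite inE /w /sel_mx mxE mul_mx_diag !mxE.
  by case: (j \in S (K - k)%N); rewrite ?mulr0 ?eqxx.
rewrite big_nat_rev big_add1 /= big_mkord; apply: trmx_inj.
rewrite linear_sum /= ea; apply: eq_bigr => i _.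
have -> : (K - (1 + K.+1 - i.+2))%N = i by have := ltn_ord i; lia.
by rewrite /w valK /= trmx_mul trmxK -mulmxA.
Qed.

Lemma controllable_of_schedule s (S : nat -> {set 'I_m}) K :
  (forall k, #|S k| <= s)%N -> (tail A B 0 <= reach_space A B S K)%MS ->
  \rank (C *m ctrb_mx A B) = n -> output_sparse_controllable A B C s.
Proof.
move=> cardS spans rank_CW; exists K.+1; split => // x0 yf.
set W := ctrb_mx A B; set y := yf - C *m (A ^+ K.+1 *m x0).
have [Winv CW_Winv] : exists Winv, C *m W *m Winv = 1%:M.
  by apply/row_freeP; rewrite /row_free rank_CW.
set v := W *m (Winv *m y).
have v_in : (v^T <= reach_space A B S K.+1)%MS.
  rewrite /v trmx_mul (submx_trans (submxMl _ _)) // ctrb_tail.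
  exact: submx_trans spans (reach_space_mono _ _ _ (leqnSn K)).
have [u [u_sparse u_sum]] := sparse_expansion cardS v_in.
have Cv : C *m v = y by rewrite /v !mulmxA CW_Winv mul1mx.
by exists u; split; rewrite // u_sum Cv /y subrK.
Qed.

End RealSystems.

Theorem mainTheorem5 (R : realType) (N m n : nat)
  (A : 'M[R]_N) (B : 'M[R]_(N, m)) (C : 'M[R]_(n, N)) :
  (forall i : nat,
     (R_idx A B C i <= \rank (ctrb_mx A B) - \rank (A *m ctrb_mx A B))%N /\
     (\rank (ctrb_mx A B) - \rank (A *m ctrb_mx A B) <= N - \rank A)%N) /\
  (forall s : nat, (0 < s <= m)%N ->
     \rank (C *m ctrb_mx A B) = n ->
     (\rank (ctrb_mx A B) - \rank (A *m ctrb_mx A B) <= s)%N ->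
     output_sparse_controllable A B C s).
Proof.
split; first exact: R_idx_bounds.
move=> s /andP [s_gt0 _] rank_CW drop_le.
rewrite rank_ctrb rank_A_ctrb in drop_le.
have [K [S [cardS spans]]] := spanning_schedule s_gt0 drop_le.
exact: controllable_of_schedule cardS spans rank_CW.
Qed.
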